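(* Let $F:[0,1]^{N}\times[0,1]\to\mathbb{R}$ be a non-constant analytic function, and let $M\in\mathbb{N}$ be such that for every $\mathbf{x}\in[0,1]^{N}$ and every $\delta>0$ the set $\mathcal{F}_{\mathbf{x},\delta}$ is a union of at most $M$ intervals. Then for all $(\epsilon,\delta)\in A$ and all $\mathbf{x}\in\Sigma_{\epsilon}$, \[ 1-\left|\mathcal{F}_{\mathbf{x},\delta}\right|\leq\epsilon(M+1). \]
   Context: $\mathcal{F}_{\mathbf{x},\delta}=\{t\in[0,1]:|F(\mathbf{x},t)|\geq\delta\}$; $|\cdot|$ is Lebesgue measure. $\Sigma=\{\mathbf{x}\in[0,1]^{N}:F(\mathbf{x},t)=0\ \forall t\in[0,1]\}$, $\Sigma_{\epsilon}=\{\mathbf{x}\in[0,1]^{N}:\operatorname{dist}(\mathbf{x},\Sigma)\geq\epsilon\}$ (with $\Sigma_\epsilon=[0,1]^N$ if $\Sigma=\emptyset$). $A=\{(\epsilon,\delta)\in(0,1]^{2}:\ \forall\mathbf{x}\in\Sigma_{\epsilon},\ \forall\xi\in[0,1],\ (\xi-\tfrac{\epsilon}{2},\xi+\tfrac{\epsilon}{2})\cap\mathcal{F}_{\mathbf{x},\delta}\neq\emptyset\}$. *)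

From HB Require Import structures.
From mathcomp Require Import all_boot all_order all_algebra.
From mathcomp Require Import all_classical all_reals all_analysis.
Set Implicit Arguments. Unset Strict Implicit. Unset Printing Implicit Defensive.
Import Order.TTheory GRing.Theory Num.Theory.
Import numFieldNormedType.Exports.
Local Open Scope classical_set_scope.
Local Open Scope ring_scope.

Section Defs.
Variables (R : realType) (N : nat).
Implicit Types (F : ('I_N -> R) -> R -> R) (x y p : 'I_N -> R).

Definition cube x : Prop := forall i, 0 <= x i <= 1.

Definition Fset F x (d : R) : set R :=
  [set t | 0 <= t <= 1 /\ d <= `|F x t|].

Definition Sigma F : set ('I_N -> R) :=
  [set x | cube x /\ forall t, 0 <= t <= 1 -> F x t = 0].

Definition edist x y : R := Num.sqrt (\sum_(i < N) (x i - y i) ^+ 2).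

(* Sigma_eps = { x in [0,1]^N : dist(x, Sigma) >= eps }, i.e. inf_{y in Sigma} |x-y| >= eps;
   when Sigma is empty this is the whole cube. *)
Definition Sigma_eps F (e : R) : set ('I_N -> R) :=
  [set x | cube x /\ forall y, Sigma F y -> e <= edist x y].

Definition inA F (e d : R) : Prop :=
  (0 < e <= 1) /\ (0 < d <= 1) /\
  forall x, Sigma_eps F e x -> forall xi, 0 <= xi <= 1 ->
    exists t, xi - e / 2 < t < xi + e / 2 /\ Fset F x d t.

(* degree-n homogeneous part of the power series with coefficients c
   (indexed by multi-index alpha in N^N for x and k in N for t) centered at (p,q),
   evaluated at (y,s); abs = true gives the sum of absolute values of the terms. *)
Definition hom_part (c : ('I_N -> nat) -> nat -> R) p (q : R) y (s : R)
  (abs : bool) (n : nat) : R :=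
  \sum_(a : {ffun 'I_N -> 'I_n.+1}) \sum_(k < n.+1)
    if (\sum_(i < N) (a i : nat) + k == n)%N then
      let term := c (fun i => (a i : nat)) k *
                  (\prod_(i < N) (y i - p i) ^+ (a i)) * (s - q) ^+ k in
      if abs then `|term| else term
    else 0.

(* real analyticity of F on [0,1]^N x [0,1]: around every point of the domain F
   is given (on the domain) by an absolutely convergent power series. *)
Definition analytic_on_cube F : Prop :=
  forall p q, cube p -> 0 <= q <= 1 ->
  exists r : R, 0 < r /\
  exists c : ('I_N -> nat) -> nat -> R,
  forall y s, cube y -> 0 <= s <= 1 ->
    (forall i, `|y i - p i| < r) -> `|s - q| < r ->
    (fun n => \sum_(0 <= m < n) hom_part c p q y s false m) @ \oo --> F y s /\
    (exists l : R, (fun n => \sum_(0 <= m < n) hom_part c p q y s true m) @ \oo --> l).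

Definition nonconstant_on_cube F : Prop :=
  exists x t y s, cube x /\ 0 <= t <= 1 /\ cube y /\ 0 <= s <= 1 /\ F x t != F y s.

Definition union_of_at_most (M : nat) (S : set R) : Prop :=
  exists l : seq (interval R), (size l <= M)%N /\
    S = [set t | exists2 I, I \in l & t \in I].

End Defs.

Set Warnings "-notation-overridden,-ambiguous-paths,-notation-incompatible-prefix".
From HB Require Import structures.
From mathcomp Require Import all_boot all_order all_algebra.
From mathcomp Require Import all_classical all_reals all_analysis.
From mathcomp Require Import lra.
Import Order.TTheory GRing.Theory Num.Theory.
Import numFieldNormedType.Exports.
Local Open Scope classical_set_scope.
Local Open Scope ring_scope.

(** Write [S] for the union of the at most [M] intervals forming [F_{x,delta}].
    By the window condition of [A], centred at [t - e/2], every [t] in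
    [(e, 1]] has a point [s] of [S] in [(t - e, t)].  If [t] itself is not in
    [S], the interval containing [s] ends in [[s, t]], so [t] lies within [e]
    to the right of one of the at most [M] upper endpoints.  Hence [[0, 1]] is
    covered by [S], [[0, e]] and [M] segments of length [e], which gives
    [1 <= |S| + (M + 1) e]. *)

Lemma measure_bigsetU_le_size {d} {T : ringOfSetsType d} {R : realFieldType}
    (mu : {content set T -> \bar R}) {I : Type} (s : seq I) (A : I -> set T)
    (c : R) :
  (forall i, measurable (A i)) -> (forall i, (mu (A i) <= c%:E)%E) ->
  (mu (\big[setU/set0]_(i <- s) A i) <= ((size s)%:R * c)%:E)%E.
Proof.
move=> mA muA; elim: s => [|i s IHs]; first by rewrite big_nil measure0 mul0r.
rewrite big_cons /= -addn1 natrD mulrDl mul1r addrC EFinD.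
apply: le_trans (measureU2 _ (mA i) _) (leeD (muA i) IHs).
by apply: bigsetU_measurable => j _.
Qed.

Section gap_cover.
Context {R : realType}.
Implicit Types (I : interval R) (l : seq (interval R)) (a b e s t : R).

(* The junk value [0] for intervals unbounded above is never used: such an
   interval cannot contain [s] and miss some [t > s]. *)
Definition itv_ub I : R := if I is Interval _ (BSide _ b) then b else 0.

Lemma itv_ub_between I s t : s \in I -> t \notin I -> s < t ->
  s <= itv_ub I <= t.
Proof.
case: I => lb ub; rewrite !itv_boundlr => /andP[lb_s s_ub] + st.
have -> /= : (lb <= BLeft t)%O by rewrite (le_trans lb_s) // bnd_simp ltW.
case: ub s_ub => [[] y|[]] //=; rewrite !bnd_simp -?leNgt -?ltNge => s_y y_t.
all: by apply/andP; split; lra.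
Qed.

Lemma lebesgue_measure_itv_cc a b : a <= b ->
  lebesgue_measure `[a, b]%classic = (b - a)%:E.
Proof.
rewrite lebesgue_measure_itv /= lte_fin le_eqVlt => /predU1P[-> | ->] //.
by rewrite ltxx subrr.
Qed.

Lemma gap_cover_unit_itv l e :
  let S := \bigcup_(I in [set` l]) [set` I] in
  (forall t, e < t <= 1 -> exists2 s, S s & t - e < s < t) ->
  `[0, 1]%classic `<=`
    S `|` (`[0, e]%classic `|` \big[setU/set0]_(I <- l) `[itv_ub I, itv_ub I + e]%classic).
Proof.
move=> S near_left t /=; rewrite in_itv /= => /andP[t_ge0 t_le1].
have [St | nSt] := pselect (S t); [by left | right].
have [t_le_e | e_lt_t] := leP t e; [by left; rewrite /= in_itv /= t_ge0 t_le_e | right].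
have [s [I lI sI] /andP[ts st]] := near_left t ltac:(lra).
have tI : t \notin I by apply/negP => tI; apply: nSt; exists I.
have /andP[s_ub ub_t] := itv_ub_between I s t sI tI st.
rewrite -bigcup_seq; exists I => //=; rewrite in_itv /=; apply/andP; split; lra.
Qed.

Lemma measure_gap_cover l e : 0 <= e ->
  let S := \bigcup_(I in [set` l]) [set` I] in
  (forall t, e < t <= 1 -> exists2 s, S s & t - e < s < t) ->
  (1 <= lebesgue_measure S + (((size l).+1)%:R * e)%:E)%E.
Proof.
move=> e_ge0 S near_left.
set segs := \big[setU/set0]_(I <- l) `[itv_ub I, itv_ub I + e]%classic.
have mS : measurable S.
  by rewrite /S bigcup_seq; apply: bigsetU_measurable => I _; exact: measurable_itv.
have msegs : measurable segs.
  by apply: bigsetU_measurable => I _; exact: measurable_itv.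
have mu_seg a : (lebesgue_measure `[a, (a + e)%R]%classic <= e%:E)%E.
  by rewrite lebesgue_measure_itv_cc ?lerDl // addrAC subrr add0r.
have mu_segs : (lebesgue_measure segs <= ((size l)%:R * e)%:E)%E.
  by apply: measure_bigsetU_le_size => [I | I]; [exact: measurable_itv | exact: mu_seg].
have mu_0e := mu_seg 0; rewrite add0r in mu_0e.
have <- : lebesgue_measure (`[0, 1]%classic : set R) = 1%E.
  by rewrite lebesgue_measure_itv_cc ?ler01 // subr0.
have mC : measurable (`[0, e]%classic `|` segs) by apply: measurableU.
apply: (@le_trans _ _ (lebesgue_measure (S `|` (`[0, e]%classic `|` segs)))).
  by apply: le_measure; rewrite ?inE; [| exact: measurableU | exact: gap_cover_unit_itv].
apply: le_trans (measureU2 lebesgue_measure mS mC) _; rewrite leeD2l //.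
apply: le_trans (measureU2 lebesgue_measure (measurable_itv _) msegs) _.
by apply: le_trans (leeD mu_0e mu_segs) _; rewrite -EFinD mulrSr mulrDl mul1r addrC.
Qed.

End gap_cover.

Theorem lemma2p2 (R : realType) (N : nat) (F : ('I_N -> R) -> R -> R) (M : nat) :
  analytic_on_cube F ->
  nonconstant_on_cube F ->
  (forall x (d : R), cube x -> 0 < d -> union_of_at_most M (Fset F x d)) ->
  forall e d : R, inA F e d ->
  forall x, Sigma_eps F e x ->
  (1%:E - lebesgue_measure (Fset F x d) <= (e * (M.+1)%:R)%:E)%E.
Proof.
move=> _ _ Fx_itvs e d [/andP[e_gt0 e_le1] [/andP[d_gt0 _] windows]] x x_far.
have [l [size_l Fx_eq]] := Fx_itvs x d x_far.1 d_gt0.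
have near_left t : e < t <= 1 -> exists2 s, Fset F x d s & t - e < s < t.
  move=> /andP[e_lt_t t_le1].
  have [s [/andP[s_gt s_lt] Fs]] := windows x x_far (t - e / 2) ltac:(lra).
  by exists s => //; apply/andP; split; lra.
rewrite Fx_eq in near_left *.
rewrite lee_subel_addr // addeC.
apply: le_trans (measure_gap_cover l e (ltW e_gt0) near_left) _.
by rewrite leeD2l // lee_fin mulrC ler_wpM2l ?(ltW e_gt0) // ler_nat ltnS.
Qed.
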